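(* Fix $-1<\alpha<0$ and a continuously differentiable $f:(0,\infty)\times\mathbb T\to\mathbb R$. Assume there is $T_1<\infty$ with $f(t,x)=0$ for $t\ge T_1$ and that $\|f\|_{C^1(\Omega_{0\bullet})}<\infty$. Let $f_n(t,x)=f(t,x)\varphi_n(t)$, $n\in\mathbb N_0$ (extended by $0$ for $t\le0$). Then there exists a finite constant $C_0$, independent of $\alpha$ and $f$, such that $$|X(f_n)|\le C_0\,2^{-n(1+\alpha)}\,\|f\|_{C^1(\Omega_{0\bullet})}\,\|X\|_{C^\alpha([-1,2]\times\mathbb T)}$$ for all $X\in C^\alpha$ and $n\in\mathbb N_0$.
   Context: $\mathbb T=[-1/2,1/2)$; on $\mathbb R\times\mathbb T$, $d((t,x),(t',x'))=|t-t'|+d_{\mathbb T}(x,x')$, $\mathbb B(z,a)$ the open ball. $\Omega_{0\bullet}=(0,\infty)\times\mathbb T$ and $\|f\|_{C^1(\Omega_{0\bullet})}=\|f\|_{L^\infty(\Omega_{0\bullet})}+\|\partial_tf\|_{L^\infty(\Omega_{0\bullet})}+\|\partial_xf\|_{L^\infty(\Omega_{0\bullet})}$. $\varphi:\mathbb R_+\to[0,1]$ is a smooth function with $\varphi(r)=0$ for $r\notin(1/16,1/4)$ and $\sum_{n\in\mathbb Z}\varphi(2^nr)=1$ for $r>0$; $\varphi_n(r)=\varphi(2^nr)$. For $-1<\alpha<0$: $B_1$ is the set of $g\in C^1_c(\mathbb R\times\mathbb T)$ supported in $\mathbb B(0,1/4)$ with $\|g\|_\infty+\|\partial_tg\|_\infty+\|\partial_xg\|_\infty\le1$;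 $(S^\delta_zg)(w)=\delta^{-2}g((w-z)/\delta)$ on $\mathbb B(z,\delta)$, $0$ otherwise; for a linear functional $X$ on $C^1_c(\mathbb R\times\mathbb T)$, $\|X\|_{C^\alpha([S,T]\times\mathbb T)}=\sup_{\delta\in(0,1]}\sup_{z\in[S,T]\times\mathbb T}\sup_{g\in B_1}\delta^{-\alpha}|X(S^\delta_zg)|$; $C^\alpha$ is the set of $X$ with this finite for all $S<T$. *)

From Stdlib Require Import Reals.
From Coquelicot Require Import Coquelicot.
Open Scope R_scope.

(* Functions on R x T, T = [-1/2,1/2) = R/Z, are represented as functions
   R -> R -> R that are 1-periodic in the second variable. *)
Definition periodic_x (D : R -> Prop) (f : R -> R -> R) : Prop :=
  forall t x, D t -> f t (x + 1) = f t x.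

Definition dT (x y : R) : R :=
  Rmin (frac_part (x - y)) (1 - frac_part (x - y)).

Definition dist2 (t x t' x' : R) : R := Rabs (t - t') + dT x x'.

Definition dt (f : R -> R -> R) (t x : R) : R := Derive (fun s => f s x) t.
Definition dx (f : R -> R -> R) (t x : R) : R := Derive (fun y => f t y) x.

Definition cont2 (h : R -> R -> R) (t x : R) : Prop :=
  continuous (fun p : R * R => h (fst p) (snd p)) (t, x).

Definition C1_on (D : R -> Prop) (f : R -> R -> R) : Prop :=
  periodic_x D f /\
  forall t x, D t ->
    ex_derive (fun s => f s x) t /\ ex_derive (fun y => f t y) x /\
    cont2 f t x /\ cont2 (dt f) t x /\ cont2 (dx f) t x.

Definition C1c (g : R -> R -> R) : Prop :=
  C1_on (fun _ => True) g /\
  exists M, forall t x, M < Rabs t -> g t x = 0.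

Definition supnorm_on (D : R -> Prop) (h : R -> R -> R) : Rbar :=
  Lub_Rbar (fun y => exists t x, D t /\ y = Rabs (h t x)).

Definition C1norm_on (D : R -> Prop) (f : R -> R -> R) : Rbar :=
  Rbar_plus (Rbar_plus (supnorm_on D f) (supnorm_on D (dt f))) (supnorm_on D (dx f)).

Definition Omega0 (t : R) : Prop := 0 < t.

Definition B1 (g : R -> R -> R) : Prop :=
  C1c g /\
  (* supp g (closure of {g <> 0}) is contained in the open ball B(0,1/4) *)
  (forall t x,
     (forall eps, 0 < eps -> exists t' x', dist2 t x t' x' < eps /\ g t' x' <> 0) ->
     dist2 t x 0 0 < 1/4) /\
  Rbar_le (C1norm_on (fun _ => True) g) 1.

(* representative in [-1/2,1/2) of a real modulo 1 *)
Definition repT (u : R) : R := u - IZR (Int_part (u + 1/2)).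

(* lift of g (a function on R x T supported in B(0,1/4)) to R x R,
   using the chart T ~ [-1/2,1/2) *)
Definition lift (g : R -> R -> R) (a b : R) : R :=
  if Rlt_dec (Rabs b) (1/2) then g a b else 0.

Definition Sdz (delta s y : R) (g : R -> R -> R) : R -> R -> R :=
  fun t x =>
    if Rlt_dec (dist2 t x s y) delta
    then / (delta ^ 2) * lift g ((t - s) / delta) (repT (x - y) / delta)
    else 0.

Definition linear_on_C1c (X : (R -> R -> R) -> R) : Prop :=
  forall f g a b, C1c f -> C1c g ->
    X (fun t x => a * f t x + b * g t x) = a * X f + b * X g.

Definition Holder_norm (alpha : R) (X : (R -> R -> R) -> R) (S T : R) : Rbar :=
  Lub_Rbar (fun v => exists delta s y g,
    0 < delta <= 1 /\ S <= s <= T /\ -1/2 <= y < 1/2 /\ B1 g /\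
    v = Rpower delta (- alpha) * Rabs (X (Sdz delta s y g))).

Definition in_Calpha (alpha : R) (X : (R -> R -> R) -> R) : Prop :=
  linear_on_C1c X /\ forall S T, S < T -> is_finite (Holder_norm alpha X S T).

Definition dyadic_partition (phi : R -> R) : Prop :=
  (forall k r, ex_derive_n phi k r) /\
  (forall r, 0 <= phi r <= 1) /\
  (forall r, ~ (1/16 < r < 1/4) -> phi r = 0) /\
  (forall r, 0 < r -> exists a b,
     is_series (fun k : nat => phi (2 ^ k * r)) a /\
     is_series (fun k : nat => phi (r / 2 ^ (S k))) b /\ a + b = 1).

Definition fn (phi : R -> R) (f : R -> R -> R) (n : nat) : R -> R -> R :=
  fun t x => if Rlt_dec 0 t then f t x * phi (2 ^ n * t) else 0.

From Pilot Require Import Defs.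
From Stdlib Require Import Reals Lra Lia ZArith FunctionalExtensionality.
From Coquelicot Require Import Coquelicot.
Open Scope R_scope.

(* The function [fn phi f n] lives in the strip [2^-n/16 < t < 2^-n/4]. Put [delta = 2^-n]. A
   C^1 partition of unity in [x], made of the [N = 8 / delta] translates [bump (N (x - y_k))] of a
   quadratic spline, cuts [fn phi f n] into [N] pieces, the [k]-th one supported in a ball of
   radius [delta/4] around [(5 delta/32, y_k)]. Rescaled by [delta] around that point and divided
   by [(17 + L) ||f||_{C^1}], where [L = sup |phi'|], the piece becomes a test function of the
   class [B_1]: the rescaling turns the derivative [2^n phi'(2^n t)] of the cut-off into [phi'] and
   the slope [N] of the partition into [8]. The definition of the Hoelder norm then bounds [X] of
   the piece by [delta^(2 + alpha) (17 + L) ||f|| ||X||], and summing over the [8 / delta] pieces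
   gives the estimate with [C0 = 8 (17 + L)]. *)

Lemma Rabs_ge_of (c w : R) : w <= - c \/ c <= w -> c <= Rabs w.
Proof.
  intros [H|H].
  - rewrite <- Rabs_Ropp. eapply Rle_trans; [|apply Rle_abs]. lra.
  - eapply Rle_trans; [|apply Rle_abs]. lra.
Qed.

(** * C^1 calculus on R x R *)

Lemma locally_abs_lt (t0 eps : R) (P : R -> Prop) : 0 < eps ->
  (forall t, Rabs (t - t0) < eps -> P t) -> locally t0 P.
Proof. intros He H. exists (mkposreal eps He). exact H. Qed.

Lemma locally_box (t0 x0 eps : R) (P : R * R -> Prop) : 0 < eps ->
  (forall t x, Rabs (t - t0) < eps -> Rabs (x - x0) < eps -> P (t, x)) ->
  locally (t0, x0) P.
Proof. intros He H. exists (mkposreal eps He). intros [t x] [Ht Hx]. exact (H t x Ht Hx). Qed.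

Lemma open_abs_lt (D : R -> Prop) (t : R) : open D -> D t ->
  exists eps, 0 < eps /\ forall s, Rabs (s - t) < eps -> D s.
Proof.
  intros HD Ht. destruct (HD t Ht) as [eps Heps].
  exists eps. split; [apply cond_pos|]. intros s Hs. exact (Heps s Hs).
Qed.

Lemma cont2_ext_loc (h g : R -> R -> R) (t0 x0 eps : R) : 0 < eps ->
  (forall t x, Rabs (t - t0) < eps -> Rabs (x - x0) < eps -> h t x = g t x) ->
  cont2 g t0 x0 -> cont2 h t0 x0.
Proof.
  intros He Heq Hg. unfold cont2, continuous. simpl.
  rewrite (Heq t0 x0) by (rewrite Rminus_diag, Rabs_R0; lra).
  eapply filterlim_ext_loc; [|exact Hg].
  apply (locally_box t0 x0 eps _ He). intros t x Ht Hx. symmetry. exact (Heq t x Ht Hx).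
Qed.

Lemma cont2_plus (f g : R -> R -> R) t x : cont2 f t x -> cont2 g t x ->
  cont2 (fun t x => f t x + g t x) t x.
Proof. exact (continuous_plus _ _ _). Qed.

Lemma cont2_mult (f g : R -> R -> R) t x : cont2 f t x -> cont2 g t x ->
  cont2 (fun t x => f t x * g t x) t x.
Proof. exact (continuous_mult _ _ _). Qed.

Lemma cont2_const (c t x : R) : cont2 (fun _ _ => c) t x.
Proof. apply continuous_const. Qed.

Lemma cont2_of_t (u : R -> R) t x : continuous u t -> cont2 (fun t _ => u t) t x.
Proof.
  intros Hu. apply (continuous_comp (fun p : R * R => fst p) u); [apply continuous_fst|exact Hu].
Qed.

Lemma cont2_of_x (u : R -> R) t x : continuous u x -> cont2 (fun _ x => u x) t x.
Proof.
  intros Hu. apply (continuous_comp (fun p : R * R => snd p) u); [apply continuous_snd|exact Hu].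
Qed.

Lemma continuous_affine (a b t : R) : continuous (fun s => a + b * s) t.
Proof.
  apply (continuous_plus (fun _ => a) (fun s => b * s)); [apply continuous_const|].
  apply (continuous_mult (fun _ => b) (fun s => s)); [apply continuous_const|apply continuous_id].
Qed.

Lemma cont2_affine (K : R -> R -> R) (a0 a1 b0 b1 t x : R) :
  cont2 K (a0 + a1 * t) (b0 + b1 * x) ->
  cont2 (fun t x => K (a0 + a1 * t) (b0 + b1 * x)) t x.
Proof.
  intros HK. apply (continuous_comp_2 (fun p : R * R => a0 + a1 * fst p)
                           (fun p : R * R => b0 + b1 * snd p) K).
  - apply (continuous_comp (fun p : R * R => fst p) (fun s => a0 + a1 * s)).
    + apply continuous_fst.
    + apply continuous_affine.
  - apply (continuous_comp (fun p : R * R => snd p) (fun s => b0 + b1 * s)).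
    + apply continuous_snd.
    + apply continuous_affine.
  - exact HK.
Qed.

Definition C1_at (h : R -> R -> R) (t x : R) : Prop :=
  ex_derive (fun s => h s x) t /\ ex_derive (fun y => h t y) x /\
  cont2 h t x /\ cont2 (dt h) t x /\ cont2 (dx h) t x.

(* [C1_on D f] unfolds to [periodic_x D f /\ C1_in D f]. *)
Definition C1_in (D : R -> Prop) (h : R -> R -> R) : Prop :=
  forall t x, D t -> C1_at h t x.

Lemma partials_ext_loc (h g : R -> R -> R) (t0 x0 eps : R) : 0 < eps ->
  (forall t x, Rabs (t - t0) < eps -> Rabs (x - x0) < eps -> h t x = g t x) ->
  forall t x, Rabs (t - t0) < eps / 2 -> Rabs (x - x0) < eps / 2 ->
  dt h t x = dt g t x /\ dx h t x = dx g t x.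
Proof.
  intros He Heq t x Ht Hx. unfold dt, dx. split; apply Derive_ext_loc.
  - apply (locally_abs_lt t (eps / 2)); [lra|]. intros s Hs. apply Heq; [|lra].
    replace (s - t0) with ((s - t) + (t - t0)) by ring.
    eapply Rle_lt_trans; [apply Rabs_triang|lra].
  - apply (locally_abs_lt x (eps / 2)); [lra|]. intros s Hs. apply Heq; [lra|].
    replace (s - x0) with ((s - x) + (x - x0)) by ring.
    eapply Rle_lt_trans; [apply Rabs_triang|lra].
Qed.

Lemma C1_at_ext_loc (h g : R -> R -> R) (t0 x0 eps : R) : 0 < eps ->
  (forall t x, Rabs (t - t0) < eps -> Rabs (x - x0) < eps -> h t x = g t x) ->
  C1_at g t0 x0 -> C1_at h t0 x0.
Proof.
  intros He Heq [Gt [Gx [G0 [G1 G2]]]].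
  assert (Hcenter : Rabs (t0 - t0) < eps /\ Rabs (x0 - x0) < eps)
    by (rewrite !Rminus_diag, Rabs_R0; lra).
  assert (Hpartials := partials_ext_loc h g t0 x0 eps He Heq).
  split; [|split; [|split; [|split]]].
  - apply (ex_derive_ext_loc (fun s => g s x0)); [|exact Gt].
    apply (locally_abs_lt t0 eps _ He). intros s Hs. symmetry. apply Heq; tauto.
  - apply (ex_derive_ext_loc (fun y => g t0 y)); [|exact Gx].
    apply (locally_abs_lt x0 eps _ He). intros y Hy. symmetry. apply Heq; tauto.
  - exact (cont2_ext_loc h g t0 x0 eps He Heq G0).
  - apply (cont2_ext_loc _ (dt g) t0 x0 (eps / 2)); [lra| |exact G1].
    intros t x Ht Hx. apply Hpartials; assumption.
  - apply (cont2_ext_loc _ (dx g) t0 x0 (eps / 2)); [lra| |exact G2].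
    intros t x Ht Hx. apply Hpartials; assumption.
Qed.

Lemma C1_in_ext (D : R -> Prop) (h g : R -> R -> R) :
  (forall t x, h t x = g t x) -> C1_in D g -> C1_in D h.
Proof.
  intros E Hg t x Ht. apply (C1_at_ext_loc h g t x 1); [lra| |exact (Hg t x Ht)].
  intros; apply E.
Qed.

Lemma C1_in_binop (op : R -> R -> R) (dop : R -> R -> R -> R -> R) (D : R -> Prop)
  (f g : R -> R -> R) : open D ->
  (forall (u v : R -> R) s, ex_derive u s -> ex_derive v s ->
     ex_derive (fun r => op (u r) (v r)) s /\
     Derive (fun r => op (u r) (v r)) s = dop (u s) (v s) (Derive u s) (Derive v s)) ->
  (forall (F G F' G' : R -> R -> R) t x,
     cont2 F t x -> cont2 G t x -> cont2 F' t x -> cont2 G' t x ->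
     cont2 (fun t x => op (F t x) (G t x)) t x /\
     cont2 (fun t x => dop (F t x) (G t x) (F' t x) (G' t x)) t x) ->
  C1_in D f -> C1_in D g -> C1_in D (fun t x => op (f t x) (g t x)).
Proof.
  intros HD Hder Hcont Hf Hg t0 x0 Ht0.
  destruct (open_abs_lt D t0 HD Ht0) as [eps [He HDe]].
  assert (Hpartials : forall t x, Rabs (t - t0) < eps ->
     dt (fun t x => op (f t x) (g t x)) t x = dop (f t x) (g t x) (dt f t x) (dt g t x) /\
     dx (fun t x => op (f t x) (g t x)) t x = dop (f t x) (g t x) (dx f t x) (dx g t x)).
  { intros t x Ht. destruct (Hf t x (HDe t Ht)) as [Ft [Fx _]].
    destruct (Hg t x (HDe t Ht)) as [Gt [Gx _]].
    split; [apply (Hder (fun s => f s x) (fun s => g s x))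
           |apply (Hder (fun y => f t y) (fun y => g t y))]; assumption. }
  destruct (Hf t0 x0 Ht0) as [Ft [Fx [F0 [F1 F2]]]].
  destruct (Hg t0 x0 Ht0) as [Gt [Gx [G0 [G1 G2]]]].
  split; [|split; [|split; [|split]]].
  - apply (Hder (fun s => f s x0) (fun s => g s x0)); assumption.
  - apply (Hder (fun y => f t0 y) (fun y => g t0 y)); assumption.
  - apply (Hcont f g f f); assumption.
  - apply (cont2_ext_loc _ (fun t x => dop (f t x) (g t x) (dt f t x) (dt g t x)) t0 x0 eps He).
    + intros t x Ht _. apply Hpartials, Ht.
    + apply (Hcont f g (dt f) (dt g)); assumption.
  - apply (cont2_ext_loc _ (fun t x => dop (f t x) (g t x) (dx f t x) (dx g t x)) t0 x0 eps He).
    + intros t x Ht _. apply Hpartials, Ht.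
    + apply (Hcont f g (dx f) (dx g)); assumption.
Qed.

Lemma C1_in_mult (D : R -> Prop) (f g : R -> R -> R) : open D ->
  C1_in D f -> C1_in D g -> C1_in D (fun t x => f t x * g t x).
Proof.
  intros HD. apply (C1_in_binop Rmult (fun a b a' b' => a' * b + a * b')); [exact HD| |].
  - intros u v s Hu Hv. split; [apply ex_derive_mult|apply Derive_mult]; assumption.
  - intros F G F' G' t x HF HG HF' HG'.
    split; [|apply cont2_plus]; apply cont2_mult; assumption.
Qed.

Lemma C1_in_plus (D : R -> Prop) (f g : R -> R -> R) : open D ->
  C1_in D f -> C1_in D g -> C1_in D (fun t x => f t x + g t x).
Proof.
  intros HD. apply (C1_in_binop Rplus (fun _ _ a' b' => a' + b')); [exact HD| |].
  - intros u v s Hu Hv. split; [apply (ex_derive_plus u v)|apply (Derive_plus u v)]; assumption.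
  - intros F G F' G' t x HF HG HF' HG'. split; apply cont2_plus; assumption.
Qed.

Lemma C1_in_const (D : R -> Prop) (c : R) : C1_in D (fun _ _ => c).
Proof.
  intros t x _. split; [|split; [|split; [|split]]];
    try apply ex_derive_const; try apply cont2_const;
    apply (cont2_ext_loc _ (fun _ _ => 0) t x 1); try lra; try apply cont2_const;
    intros; apply Derive_const.
Qed.

Lemma C1_in_scal (D : R -> Prop) (c : R) (f : R -> R -> R) : open D ->
  C1_in D f -> C1_in D (fun t x => c * f t x).
Proof. intros HD. apply (C1_in_mult D (fun _ _ => c) f HD), C1_in_const. Qed.

Lemma C1_in_of_t (D : R -> Prop) (u : R -> R) :
  (forall s, ex_derive u s) -> (forall s, continuous (Derive u) s) ->
  C1_in D (fun t _ => u t).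
Proof.
  intros Hu Hu' t x _. split; [|split; [|split; [|split]]].
  - apply Hu.
  - apply ex_derive_const.
  - apply cont2_of_t, (@ex_derive_continuous R_AbsRing R_NormedModule), Hu.
  - apply (cont2_of_t (Derive u)), Hu'.
  - apply (cont2_ext_loc _ (fun _ _ => 0) t x 1); [lra| |apply cont2_const].
    intros; unfold dx; apply Derive_const.
Qed.

Lemma C1_in_of_x (D : R -> Prop) (u : R -> R) :
  (forall s, ex_derive u s) -> (forall s, continuous (Derive u) s) ->
  C1_in D (fun _ x => u x).
Proof.
  intros Hu Hu' t x _. split; [|split; [|split; [|split]]].
  - apply ex_derive_const.
  - apply Hu.
  - apply cont2_of_x, (@ex_derive_continuous R_AbsRing R_NormedModule), Hu.
  - apply (cont2_ext_loc _ (fun _ _ => 0) t x 1); [lra| |apply cont2_const].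
    intros; unfold dt; apply Derive_const.
  - apply (cont2_of_x (Derive u)), Hu'.
Qed.

Lemma dt_mult (f g : R -> R -> R) t x :
  ex_derive (fun s => f s x) t -> ex_derive (fun s => g s x) t ->
  dt (fun t x => f t x * g t x) t x = dt f t x * g t x + f t x * dt g t x.
Proof. apply (Derive_mult (fun s => f s x) (fun s => g s x)). Qed.

Lemma dx_mult (f g : R -> R -> R) t x :
  ex_derive (fun y => f t y) x -> ex_derive (fun y => g t y) x ->
  dx (fun t x => f t x * g t x) t x = dx f t x * g t x + f t x * dx g t x.
Proof. apply (Derive_mult (fun y => f t y) (fun y => g t y)). Qed.

Lemma is_derive_affine (a0 a1 t : R) : is_derive (fun s => a0 + a1 * s) t a1.
Proof. auto_derive; [exact I|ring]. Qed.

Lemma ex_derive_affine (a0 a1 t : R) : ex_derive (fun s => a0 + a1 * s) t.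
Proof. exists a1. apply is_derive_affine. Qed.

Lemma Derive_affine (a0 a1 t : R) : Derive (fun s => a0 + a1 * s) t = a1.
Proof. apply is_derive_unique, is_derive_affine. Qed.

Lemma dt_affine (K : R -> R -> R) (a0 a1 b0 b1 t x : R) :
  ex_derive (fun s => K s (b0 + b1 * x)) (a0 + a1 * t) ->
  dt (fun t x => K (a0 + a1 * t) (b0 + b1 * x)) t x = a1 * dt K (a0 + a1 * t) (b0 + b1 * x).
Proof.
  intros H. unfold dt.
  rewrite (Derive_comp (fun s => K s (b0 + b1 * x)) (fun s => a0 + a1 * s)); [|exact H|].
  - rewrite Derive_affine. reflexivity.
  - apply ex_derive_affine.
Qed.

Lemma dx_affine (K : R -> R -> R) (a0 a1 b0 b1 t x : R) :
  ex_derive (fun y => K (a0 + a1 * t) y) (b0 + b1 * x) ->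
  dx (fun t x => K (a0 + a1 * t) (b0 + b1 * x)) t x = b1 * dx K (a0 + a1 * t) (b0 + b1 * x).
Proof.
  intros H. unfold dx.
  rewrite (Derive_comp (fun y => K (a0 + a1 * t) y) (fun y => b0 + b1 * y)); [|exact H|].
  - rewrite Derive_affine. reflexivity.
  - apply ex_derive_affine.
Qed.

Lemma C1_in_affine (K : R -> R -> R) (a0 a1 b0 b1 : R) : C1_in (fun _ => True) K ->
  C1_in (fun _ => True) (fun t x => K (a0 + a1 * t) (b0 + b1 * x)).
Proof.
  intros HK t x _.
  assert (HKt : forall t x, ex_derive (fun s => K s (b0 + b1 * x)) (a0 + a1 * t))
    by (intros t' x'; exact (proj1 (HK _ _ I))).
  assert (HKx : forall t x, ex_derive (fun y => K (a0 + a1 * t) y) (b0 + b1 * x))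
    by (intros t' x'; exact (proj1 (proj2 (HK _ _ I)))).
  destruct (HK (a0 + a1 * t) (b0 + b1 * x) I) as [_ [_ [K0 [K1 K2]]]].
  split; [|split; [|split; [|split]]].
  - apply (ex_derive_comp (fun s => K s (b0 + b1 * x)) (fun s => a0 + a1 * s)).
    + apply HKt.
    + apply ex_derive_affine.
  - apply (ex_derive_comp (fun y => K (a0 + a1 * t) y) (fun y => b0 + b1 * y)).
    + apply HKx.
    + apply ex_derive_affine.
  - apply cont2_affine, K0.
  - apply (cont2_ext_loc _ (fun t x => a1 * dt K (a0 + a1 * t) (b0 + b1 * x)) t x 1); [lra| |].
    + intros t' x' _ _. apply dt_affine, HKt.
    + apply (cont2_mult (fun _ _ => a1)); [apply cont2_const|apply (cont2_affine (dt K)), K1].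
  - apply (cont2_ext_loc _ (fun t x => b1 * dx K (a0 + a1 * t) (b0 + b1 * x)) t x 1); [lra| |].
    + intros t' x' _ _. apply dx_affine, HKx.
    + apply (cont2_mult (fun _ _ => b1)); [apply cont2_const|apply (cont2_affine (dx K)), K2].
Qed.

(** * A C^1 quadratic spline *)

Definition pos_part (w : R) : R := (w + Rabs w) / 2.

Lemma pos_part_of_nonneg (w : R) : 0 <= w -> pos_part w = w.
Proof. intros H. unfold pos_part. rewrite Rabs_right; lra. Qed.

Lemma pos_part_of_nonpos (w : R) : w <= 0 -> pos_part w = 0.
Proof. intros H. unfold pos_part. rewrite Rabs_left1; lra. Qed.

Lemma continuous_pos_part (w : R) : continuous pos_part w.
Proof.
  apply (continuous_mult (fun w => w + Rabs w) (fun _ => / 2)); [|apply continuous_const].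
  apply (continuous_plus (fun w => w) Rabs); [apply continuous_id|apply continuous_Rabs].
Qed.

Lemma is_derive_pos_part_sq (w : R) : is_derive (fun s => pos_part s ^ 2) w (2 * pos_part w).
Proof.
  destruct (Rlt_or_le 0 w) as [Hw|Hw]; [|destruct (Rlt_or_le w 0) as [Hw'|Hw']].
  - apply (@is_derive_ext_loc R_AbsRing R_NormedModule (fun s => s ^ 2)).
    + apply (locally_abs_lt w w); [exact Hw|]. intros s Hs. apply Rabs_def2 in Hs.
      rewrite pos_part_of_nonneg; lra.
    + rewrite pos_part_of_nonneg by lra. change (is_derive (fun s : R => s ^ 2) w (2 * w)).
      auto_derive; [exact I|ring].
  - apply (@is_derive_ext_loc R_AbsRing R_NormedModule (fun _ => 0)).
    + apply (locally_abs_lt w (- w)); [lra|]. intros s Hs. apply Rabs_def2 in Hs.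
      cbv beta. rewrite pos_part_of_nonpos by lra. change (0 = 0 ^ 2 :> R). ring.
    + rewrite pos_part_of_nonpos by lra. rewrite Rmult_0_r.
      apply (@is_derive_const R_AbsRing R_NormedModule).
  - replace w with 0 by lra. rewrite pos_part_of_nonneg, Rmult_0_r by lra.
    apply is_derive_Reals. intros eps He. exists (mkposreal eps He). intros h Hh0 Hh. simpl in Hh.
    rewrite Rplus_0_l, (pos_part_of_nonneg 0), Rminus_0_r by lra.
    destruct (Rle_or_lt 0 h).
    + rewrite pos_part_of_nonneg by lra. replace ((h ^ 2 - 0 ^ 2) / h) with h by (field; lra).
      exact Hh.
    + rewrite pos_part_of_nonpos by lra. replace ((0 ^ 2 - 0 ^ 2) / h) with 0 by (field; lra).
      rewrite Rabs_R0. exact He.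
Qed.

(* [bump w] is [1 - 2 w^2] for [|w| <= 1/2], [2 (1 - |w|)^2] for [1/2 <= |w| <= 1] and [0]
   beyond; the identity [bump w = smooth_step (w + 1) - smooth_step w] makes its integer
   translates telescope to [1]. *)
Definition bump (w : R) : R :=
  2 * pos_part (w + 1) ^ 2 - 4 * pos_part (w + 1/2) ^ 2
  + 4 * pos_part (w - 1/2) ^ 2 - 2 * pos_part (w - 1) ^ 2.

Definition bump' (w : R) : R :=
  4 * pos_part (w + 1) - 8 * pos_part (w + 1/2) + 8 * pos_part (w - 1/2) - 4 * pos_part (w - 1).

Definition smooth_step (w : R) : R :=
  2 * pos_part w ^ 2 - 4 * pos_part (w - 1/2) ^ 2 + 2 * pos_part (w - 1) ^ 2.

Lemma is_derive_bump (w : R) : is_derive bump w (bump' w).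
Proof.
  assert (Hsq : forall k c,
    is_derive (fun w => k * pos_part (w + c) ^ 2) w (k * (2 * pos_part (w + c)))).
  { intros k c. apply (is_derive_scal (fun w => pos_part (w + c) ^ 2)).
    rewrite <- (Rmult_1_l (2 * pos_part (w + c))).
    apply (is_derive_comp (fun s => pos_part s ^ 2) (fun w => w + c)).
    - apply is_derive_pos_part_sq.
    - auto_derive; [exact I|ring]. }
  replace bump with (fun w => 2 * pos_part (w + 1) ^ 2 + -4 * pos_part (w + 1/2) ^ 2
                       + 4 * pos_part (w - 1/2) ^ 2 + -2 * pos_part (w - 1) ^ 2)
    by (apply functional_extensionality; intros s; unfold bump; ring).
  replace (bump' w) with (2 * (2 * pos_part (w + 1)) + -4 * (2 * pos_part (w + 1/2))
                          + 4 * (2 * pos_part (w - 1/2)) + -2 * (2 * pos_part (w - 1)))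
    by (unfold bump'; ring).
  repeat apply (@is_derive_plus R_AbsRing R_NormedModule); apply Hsq.
Qed.

Lemma Derive_bump (w : R) : Derive bump w = bump' w.
Proof. apply is_derive_unique, is_derive_bump. Qed.

Lemma continuous_bump' (w : R) : continuous bump' w.
Proof.
  assert (Hc : forall k c, continuous (fun w => k * pos_part (w + c)) w).
  { intros k c. apply (continuous_mult (fun _ => k)); [apply continuous_const|].
    apply (continuous_comp (fun w => w + c) pos_part); [|apply continuous_pos_part].
    apply (continuous_plus (fun w => w) (fun _ => c));
      [apply continuous_id|apply continuous_const]. }
  replace bump' with (fun w => 4 * pos_part (w + 1) + -8 * pos_part (w + 1/2)
                       + 8 * pos_part (w - 1/2) + -4 * pos_part (w - 1))
    by (apply functional_extensionality; intros s; unfold bump'; ring).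
  apply (@continuous_plus R_UniformSpace R_AbsRing R_NormedModule); [|apply Hc].
  apply (@continuous_plus R_UniformSpace R_AbsRing R_NormedModule); [|apply Hc].
  apply (@continuous_plus R_UniformSpace R_AbsRing R_NormedModule); apply Hc.
Qed.

Lemma bump_C1 : C1_in (fun _ => True) (fun _ x => bump x).
Proof.
  apply C1_in_of_x.
  - intros s. exists (bump' s). apply is_derive_bump.
  - intros s. apply (continuous_ext bump'); [intros; symmetry; apply Derive_bump|].
    apply continuous_bump'.
Qed.

Ltac pos_part_cases :=
  repeat match goal with
  | |- context [pos_part ?a] =>
      let H := fresh in destruct (Rle_or_lt 0 a) as [H|H];
      [rewrite (pos_part_of_nonneg a H)|rewrite (pos_part_of_nonpos a (Rlt_le _ _ H))]
  end.

Lemma bump_out (w : R) : 1 <= Rabs w -> bump w = 0.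
Proof.
  intros H. unfold bump.
  destruct (Rle_or_lt 0 w); [rewrite Rabs_right in H|rewrite Rabs_left in H]; try lra;
    pos_part_cases; lra || nra.
Qed.

Lemma bump_bound (w : R) : Rabs (bump w) <= 1.
Proof. apply Rabs_le. unfold bump. pos_part_cases; split; lra || nra. Qed.

Lemma bump'_bound (w : R) : Rabs (bump' w) <= 2.
Proof. apply Rabs_le. unfold bump'. pos_part_cases; split; lra || nra. Qed.

Lemma bump_smooth_step (w : R) : bump w = smooth_step (w + 1) - smooth_step w.
Proof.
  unfold bump, smooth_step. replace (w + 1 - 1/2) with (w + 1/2) by lra.
  replace (w + 1 - 1) with w by ring. ring.
Qed.

Lemma smooth_step_of_ge1 (w : R) : 1 <= w -> smooth_step w = 1.
Proof. intros H. unfold smooth_step. pos_part_cases; lra || nra. Qed.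

Lemma smooth_step_of_nonpos (w : R) : w <= 0 -> smooth_step w = 0.
Proof. intros H. unfold smooth_step. pos_part_cases; lra || nra. Qed.

Lemma repT_range (u : R) : -1/2 <= repT u < 1/2.
Proof. unfold repT. destruct (base_Int_part (u + 1/2)). lra. Qed.

Lemma repT_id (u : R) : -1/2 <= u < 1/2 -> repT u = u.
Proof.
  intros H. unfold repT. rewrite <- (Int_part_spec (u + 1/2) 0); simpl; lra.
Qed.

Lemma repT_shift (u : R) (k : Z) : repT (u + IZR k) = repT u.
Proof.
  unfold repT. destruct (base_Int_part (u + 1/2)).
  rewrite <- (Int_part_spec (u + IZR k + 1/2) (Int_part (u + 1/2) + k)); rewrite plus_IZR; lra.
Qed.

Lemma repT_plus1 (u : R) : repT (u + 1) = repT u.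
Proof. exact (repT_shift u 1). Qed.

Lemma dT_le (x y : R) (k : Z) : dT x y <= Rabs (x - y - IZR k).
Proof.
  unfold dT, frac_part. destruct (base_Int_part (x - y)) as [H1 H2].
  set (I := Int_part (x - y)) in *.
  destruct (Z.le_gt_cases k I) as [Hk|Hk].
  - apply IZR_le in Hk. eapply Rle_trans; [apply Rmin_l|]. rewrite Rabs_right; lra.
  - assert (Hk' : IZR I + 1 <= IZR k) by (rewrite <- plus_IZR; apply IZR_le; lia).
    eapply Rle_trans; [apply Rmin_r|]. rewrite Rabs_left1; lra.
Qed.

Lemma dT_attained (x y : R) : exists k, dT x y = Rabs (x - y - IZR k).
Proof.
  unfold dT, frac_part. destruct (base_Int_part (x - y)) as [H1 H2].
  set (I := Int_part (x - y)) in *.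
  destruct (Rle_or_lt (x - y - IZR I) (1 - (x - y - IZR I))).
  - exists I. rewrite Rmin_left, Rabs_right; lra.
  - exists (I + 1)%Z. rewrite Rmin_right, plus_IZR, Rabs_left1; lra.
Qed.

Lemma dT_triang (x y z : R) : dT x z <= dT x y + dT y z.
Proof.
  destruct (dT_attained x y) as [k1 ->]. destruct (dT_attained y z) as [k2 ->].
  eapply Rle_trans; [apply (dT_le x z (k1 + k2))|].
  replace (x - z - IZR (k1 + k2)) with ((x - y - IZR k1) + (y - z - IZR k2))
    by (rewrite plus_IZR; ring).
  apply Rabs_triang.
Qed.

Lemma dT_le_repT (x y : R) : dT x y <= Rabs (repT (x - y)).
Proof. apply dT_le. Qed.

Definition periodize (H : R -> R -> R) (a b : R) : R := H a (repT b).

Lemma periodize_periodic (D : R -> Prop) (H : R -> R -> R) : periodic_x D (periodize H).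
Proof. intros a b _. unfold periodize. rewrite repT_plus1. reflexivity. Qed.

Section Periodize.

Variable H : R -> R -> R.
Hypothesis H_vanish : forall a u, 1/4 <= Rabs u -> H a u = 0.

(* Near [b0], [repT] is the translation by the integer [Int_part (b0 + 1/2)]: where the two
   differ, both arguments have absolute value at least [1/4], where [H] vanishes. *)
Lemma periodize_local (b0 b a : R) : Rabs (b - b0) < 1/4 ->
  periodize H a b = H a (b - IZR (Int_part (b0 + 1/2))).
Proof.
  intros Hb. apply Rabs_def2 in Hb. unfold periodize, repT.
  destruct (base_Int_part (b0 + 1/2)) as [M1 M2].
  destruct (base_Int_part (b + 1/2)) as [N1 N2].
  set (m0 := Int_part (b0 + 1/2)) in *. set (m := Int_part (b + 1/2)) in *.
  destruct (Z.lt_trichotomy m m0) as [Hm|[->|Hm]]; [| reflexivity |].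
  - assert (IZR m + 1 <= IZR m0) by (rewrite <- plus_IZR; apply IZR_le; lia).
    rewrite !H_vanish; [reflexivity| |]; apply Rabs_ge_of; lra.
  - assert (IZR m0 + 1 <= IZR m) by (rewrite <- plus_IZR; apply IZR_le; lia).
    rewrite !H_vanish; [reflexivity| |]; apply Rabs_ge_of; lra.
Qed.

Lemma periodize_local_affine (b0 : R) :
  forall a b, Rabs (b - b0) < 1/4 ->
  periodize H a b = H (0 + 1 * a) (- IZR (Int_part (b0 + 1/2)) + 1 * b).
Proof.
  intros a b Hb. rewrite (periodize_local b0 b a Hb). f_equal; ring.
Qed.

Lemma periodize_C1 : C1_in (fun _ => True) H -> C1_in (fun _ => True) (periodize H).
Proof.
  intros HC a0 b0 _.
  apply (C1_at_ext_loc _ (fun a b => H (0 + 1 * a) (- IZR (Int_part (b0 + 1/2)) + 1 * b))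
           a0 b0 (1/4)); [lra| |].
  - intros a b _ Hb. exact (periodize_local_affine b0 a b Hb).
  - exact (C1_in_affine H 0 1 _ 1 HC a0 b0 I).
Qed.

Lemma dx_periodize : C1_in (fun _ => True) H ->
  forall a b, dx (periodize H) a b = dx H a (repT b).
Proof.
  intros HC a b0. set (m0 := IZR (Int_part (b0 + 1/2))).
  assert (Hloc : dx (periodize H) a b0 = dx (fun a b => H (0 + 1 * a) (- m0 + 1 * b)) a b0).
  { refine (proj2 (partials_ext_loc _ _ a b0 (1/4) _ _ a b0 _ _));
      try lra; try (rewrite Rminus_diag, Rabs_R0; lra).
    intros a' b _ Hb. exact (periodize_local_affine b0 a' b Hb). }
  rewrite Hloc, dx_affine; [|exact (proj1 (proj2 (HC _ _ I)))].
  rewrite Rmult_1_l. unfold repT, m0. f_equal; ring.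
Qed.

End Periodize.

(** * A partition of unity of the circle *)

Lemma sum_bump_shift (c : R) (m : nat) :
  sum_n_m (fun k => bump (c + INR k)) 1 m = smooth_step (c + INR m + 1) - smooth_step (c + 1).
Proof.
  induction m as [|m IHm].
  - rewrite sum_n_m_zero by lia. simpl. rewrite Rplus_0_r. change zero with 0. ring.
  - rewrite sum_n_Sm, IHm, bump_smooth_step, S_INR by lia. change plus with Rplus. simpl.
    rewrite <- (Rplus_assoc c (INR m) 1). ring.
Qed.

Lemma bump_repT (N z : R) : 2 <= N -> -3/2 <= z < 3/2 ->
  bump (N * repT z) = bump (N * (z + 1)) + bump (N * z) + bump (N * (z - 1)).
Proof.
  intros HN Hz. unfold repT. destruct (base_Int_part (z + 1/2)) as [I1 I2].
  set (m := Int_part (z + 1/2)) in *.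
  assert (Hm : (m = -1 \/ m = 0 \/ m = 1)%Z).
  { assert (-2 < m)%Z by (apply lt_IZR; simpl; lra).
    assert (m < 2)%Z by (apply lt_IZR; simpl; lra). lia. }
  assert (Hout : forall w, w <= -1 \/ 1 <= w -> bump w = 0)
    by (intros w Hw; apply bump_out, Rabs_ge_of, Hw).
  destruct Hm as [-> | [-> | ->]]; simpl IZR in *.
  - rewrite (Hout (N * z)), (Hout (N * (z - 1))) by (left; nra).
    replace (z - -1) with (z + 1) by ring. ring.
  - rewrite (Hout (N * (z + 1))) by (right; nra). rewrite (Hout (N * (z - 1))) by (left; nra).
    rewrite Rminus_0_r. ring.
  - rewrite (Hout (N * (z + 1))), (Hout (N * z)) by (right; nra). ring.
Qed.

Lemma bump_node (N : nat) (x : R) (k : nat) : (2 <= N)%nat -> (1 <= k <= N)%nat ->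
  let u := INR N * (repT x + 1/2) in
  bump (INR N * repT (x - (1/2 - INR k / INR N)))
  = bump (u + INR k) + bump (u - INR N + INR k) + bump (u - 2 * INR N + INR k).
Proof.
  intros HN Hk u. set (Nr := INR N) in *.
  assert (HNr : 2 <= Nr) by (unfold Nr; replace 2 with (INR 2) by reflexivity; apply le_INR; lia).
  assert (Hq : 0 < INR k / Nr <= 1).
  { assert (1 <= INR k <= Nr) by (split; [apply (le_INR 1)|apply le_INR]; lia).
    split; [apply Rdiv_lt_0_compat|apply (Rdiv_le_1 (INR k) Nr)]; lra. }
  set (z := repT x - 1/2 + INR k / Nr).
  replace (x - (1/2 - INR k / Nr)) with (z + IZR (Int_part (x + 1/2))) by (unfold z, repT; ring).
  destruct (repT_range x).
  rewrite repT_shift, bump_repT by (unfold z; lra).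
  unfold z, u.
  replace (Nr * (repT x - 1/2 + INR k / Nr + 1)) with (Nr * (repT x + 1/2) + INR k) by (field; lra).
  replace (Nr * (repT x - 1/2 + INR k / Nr)) with (Nr * (repT x + 1/2) - Nr + INR k)
    by (field; lra).
  replace (Nr * (repT x - 1/2 + INR k / Nr - 1)) with (Nr * (repT x + 1/2) - 2 * Nr + INR k)
    by (field; lra).
  reflexivity.
Qed.

(* The nodes are [1/2 - k/N] rather than [k/N] so that they lie in [[-1/2, 1/2)], as the norm
   [Holder_norm] requires. *)
Lemma bump_partition (N : nat) (x : R) : (2 <= N)%nat ->
  sum_n_m (fun k => bump (INR N * repT (x - (1/2 - INR k / INR N)))) 1 N = 1.
Proof.
  intros HN. set (u := INR N * (repT x + 1/2)).
  assert (HNr : 2 <= INR N) by (replace 2 with (INR 2) by reflexivity; apply le_INR; lia).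
  assert (Hu : 0 <= u < INR N) by (destruct (repT_range x); unfold u; split; nra).
  rewrite (sum_n_m_ext_loc _ (fun k => plus (plus (bump (u + INR k)) (bump ((u - INR N) + INR k)))
                                            (bump ((u - 2 * INR N) + INR k))))
    by (intros k Hk; exact (bump_node N x k HN Hk)).
  rewrite !sum_n_m_plus, !sum_bump_shift. change plus with Rplus.
  rewrite (smooth_step_of_ge1 (u + INR N + 1)), (smooth_step_of_nonpos (u - 2 * INR N + 1))
    by lra.
  replace (u - INR N + INR N + 1) with (u + 1) by ring.
  replace (u - 2 * INR N + INR N + 1) with (u - INR N + 1) by ring.
  simpl. ring.
Qed.

Lemma supnorm_on_ub (D : R -> Prop) (h : R -> R -> R) (r : R) :
  supnorm_on D h = Finite r -> forall t x, D t -> Rabs (h t x) <= r.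
Proof.
  intros E t x Ht. unfold supnorm_on in E.
  destruct (Lub_Rbar_correct (fun y => exists t x, D t /\ y = Rabs (h t x))) as [Hub _].
  rewrite E in Hub. apply Hub. exists t, x. split; [exact Ht|reflexivity].
Qed.

Lemma supnorm_on_nonneg (D : R -> Prop) (h : R -> R -> R) :
  (exists t, D t) -> Rbar_le 0 (supnorm_on D h).
Proof.
  intros [t0 Ht0]. unfold supnorm_on.
  destruct (Lub_Rbar_correct (fun y => exists t x, D t /\ y = Rabs (h t x))) as [Hub _].
  eapply Rbar_le_trans; [|apply Hub; exists t0, 0; split; [exact Ht0|reflexivity]].
  apply Rabs_pos.
Qed.

Lemma supnorm_on_le (D : R -> Prop) (h : R -> R -> R) (B : R) :
  (forall t x, D t -> Rabs (h t x) <= B) -> Rbar_le (supnorm_on D h) B.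
Proof.
  intros HB. apply Lub_Rbar_correct. intros y [t [x [Ht ->]]]. apply HB, Ht.
Qed.

Lemma C1norm_on_finite (D : R -> Prop) (h : R -> R -> R) :
  (exists t, D t) -> is_finite (C1norm_on D h) ->
  exists a b c, supnorm_on D h = Finite a /\ supnorm_on D (dt h) = Finite b /\
    supnorm_on D (dx h) = Finite c /\ 0 <= a /\ 0 <= b /\ 0 <= c /\
    real (C1norm_on D h) = a + b + c.
Proof.
  intros HD Hfin. unfold C1norm_on in *.
  generalize (supnorm_on_nonneg D h HD), (supnorm_on_nonneg D (dt h) HD),
    (supnorm_on_nonneg D (dx h) HD).
  destruct (supnorm_on D h) as [a| |]; destruct (supnorm_on D (dt h)) as [b| |];
    destruct (supnorm_on D (dx h)) as [c| |]; simpl; intros Ha Hb Hc;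
    try contradiction; try discriminate.
  exists a, b, c. repeat split; assumption.
Qed.

Definition C1_bounds (h : R -> R -> R) (K0 K1 K2 : R) : Prop :=
  (forall a u, Rabs (h a u) <= K0) /\ (forall a u, Rabs (dt h a u) <= K1) /\
  (forall a u, Rabs (dx h a u) <= K2).

Lemma C1norm_on_le (h : R -> R -> R) (K0 K1 K2 : R) : C1_bounds h K0 K1 K2 ->
  Rbar_le (C1norm_on (fun _ => True) h) (K0 + K1 + K2).
Proof.
  intros [H0 [H1 H2]]. unfold C1norm_on.
  generalize (supnorm_on_le (fun _ => True) h K0 (fun t x _ => H0 t x)),
    (supnorm_on_le (fun _ => True) (dt h) K1 (fun t x _ => H1 t x)),
    (supnorm_on_le (fun _ => True) (dx h) K2 (fun t x _ => H2 t x)),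
    (supnorm_on_nonneg (fun _ => True) h (ex_intro _ 0 I)),
    (supnorm_on_nonneg (fun _ => True) (dt h) (ex_intro _ 0 I)),
    (supnorm_on_nonneg (fun _ => True) (dx h) (ex_intro _ 0 I)).
  destruct (supnorm_on (fun _ => True) h) as [a| |];
    destruct (supnorm_on (fun _ => True) (dt h)) as [b| |];
    destruct (supnorm_on (fun _ => True) (dx h)) as [c| |]; simpl; intros; lra.
Qed.

Lemma Rabs_mult_le (a b A B : R) : Rabs a <= A -> Rabs b <= B -> Rabs (a * b) <= A * B.
Proof. intros Ha Hb. rewrite Rabs_mult. apply Rmult_le_compat; auto using Rabs_pos. Qed.

Lemma C1_bounds_mult (F Q : R -> R -> R) (A0 A1 A2 B0 B1 B2 : R) :
  C1_in (fun _ => True) F -> C1_in (fun _ => True) Q ->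
  C1_bounds F A0 A1 A2 -> C1_bounds Q B0 B1 B2 ->
  C1_bounds (fun a u => F a u * Q a u) (A0 * B0) (A1 * B0 + A0 * B1) (A2 * B0 + A0 * B2).
Proof.
  intros CF CQ [F0 [F1 F2]] [Q0 [Q1 Q2]].
  split; [|split]; intros a u.
  - apply Rabs_mult_le; auto.
  - rewrite dt_mult by (exact (proj1 (CF a u I)) || exact (proj1 (CQ a u I))).
    eapply Rle_trans; [apply Rabs_triang|]. apply Rplus_le_compat; apply Rabs_mult_le; auto.
  - rewrite dx_mult by (exact (proj1 (proj2 (CF a u I))) || exact (proj1 (proj2 (CQ a u I)))).
    eapply Rle_trans; [apply Rabs_triang|]. apply Rplus_le_compat; apply Rabs_mult_le; auto.
Qed.

Lemma C1_bounds_scal (c : R) (F : R -> R -> R) (A0 A1 A2 : R) : 0 <= c ->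
  C1_bounds F A0 A1 A2 -> C1_bounds (fun a u => c * F a u) (c * A0) (c * A1) (c * A2).
Proof.
  intros Hc [F0 [F1 F2]].
  split; [|split]; intros a u; [|unfold dt; rewrite (Derive_scal (fun s => F s u))
                                 |unfold dx; rewrite (Derive_scal (fun s => F a s))];
    rewrite Rabs_mult, (Rabs_pos_eq c Hc); (apply Rmult_le_compat_l; [exact Hc|]);
    [apply F0|apply F1|apply F2].
Qed.

Lemma C1_bounds_affine (K : R -> R -> R) (a0 a1 b0 b1 A0 A1 A2 : R) :
  C1_in (fun _ => True) K -> C1_bounds K A0 A1 A2 ->
  C1_bounds (fun a u => K (a0 + a1 * a) (b0 + b1 * u)) A0 (Rabs a1 * A1) (Rabs b1 * A2).
Proof.
  intros CK [K0 [K1 K2]]. split; [|split]; intros a u.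
  - apply K0.
  - rewrite dt_affine by exact (proj1 (CK _ _ I)). apply Rabs_mult_le; [lra|apply K1].
  - rewrite dx_affine by exact (proj1 (proj2 (CK _ _ I))). apply Rabs_mult_le; [lra|apply K2].
Qed.

Definition vanishes_off_ball (rho : R) (H : R -> R -> R) : Prop :=
  forall a u, rho <= Rabs a + Rabs u -> H a u = 0.

Section PeriodizeBall.

Variables (H : R -> R -> R) (rho : R).
Hypothesis H_C1 : C1_in (fun _ => True) H.
Hypothesis H_vanish : vanishes_off_ball rho H.
Hypothesis rho_lt : rho < 1/4.

Lemma vanishes_off_ball_u : forall a u, 1/4 <= Rabs u -> H a u = 0.
Proof. intros a u Hu. apply H_vanish. generalize (Rabs_pos a). lra. Qed.

Lemma C1_bounds_periodize (K0 K1 K2 : R) :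
  C1_bounds H K0 K1 K2 -> C1_bounds (periodize H) K0 K1 K2.
Proof.
  intros [B0 [B1 B2]]. split; [|split]; intros a b.
  - apply B0.
  - apply B1.
  - rewrite (dx_periodize H vanishes_off_ball_u H_C1). apply B2.
Qed.

Lemma C1c_periodize : C1c (periodize H).
Proof.
  split; [split|].
  - apply periodize_periodic.
  - exact (periodize_C1 H vanishes_off_ball_u H_C1).
  - exists 1. intros t x Ht. apply H_vanish. generalize (Rabs_pos (repT x)). lra.
Qed.

Lemma support_periodize (t x : R) :
  (forall eps, 0 < eps -> exists t' x', dist2 t x t' x' < eps /\ periodize H t' x' <> 0) ->
  dist2 t x 0 0 < 1/4.
Proof.
  intros Hcl. destruct (Hcl (1/4 - rho)) as [t' [x' [Hd Hne]]]; [lra|].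
  assert (Hsupp : Rabs t' + Rabs (repT x') < rho)
    by (apply Rnot_le_lt; intros Hle; exact (Hne (H_vanish _ _ Hle))).
  unfold dist2 in *. generalize (dT_triang x x' 0), (dT_le_repT x' 0).
  rewrite !Rminus_0_r. generalize (Rabs_triang (t - t') t'). replace (t - t' + t') with t by ring.
  lra.
Qed.

Lemma B1_periodize (K0 K1 K2 : R) :
  C1_bounds H K0 K1 K2 -> K0 + K1 + K2 <= 1 -> Defs.B1 (periodize H).
Proof.
  intros HB Hsum. split; [exact C1c_periodize|split; [exact support_periodize|]].
  eapply Rbar_le_trans; [apply C1norm_on_le, C1_bounds_periodize, HB|exact Hsum].
Qed.

End PeriodizeBall.

Lemma C1c_lin (F G : R -> R -> R) (a b : R) :
  C1c F -> C1c G -> C1c (fun t x => a * F t x + b * G t x).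
Proof.
  intros [[PF CF] [MF HF]] [[PG CG] [MG HG]]. split; [split|].
  - intros t x _. rewrite PF, PG; auto.
  - apply C1_in_plus; [apply open_true| |]; apply C1_in_scal; auto; apply open_true.
  - exists (Rmax MF MG). intros t x Ht.
    assert (MF < Rabs t) by (eapply Rle_lt_trans; [apply Rmax_l|exact Ht]).
    assert (MG < Rabs t) by (eapply Rle_lt_trans; [apply Rmax_r|exact Ht]).
    rewrite HF, HG by assumption. ring.
Qed.

Lemma C1c_zero : C1c (fun _ _ => 0).
Proof.
  split; [split|].
  - intros t x _. reflexivity.
  - apply C1_in_const.
  - exists 0. intros; reflexivity.
Qed.

Lemma C1c_scal (c : R) (F : R -> R -> R) : C1c F -> C1c (fun t x => c * F t x).
Proof.
  intros HF.
  replace (fun t x => c * F t x) with (fun t x => c * F t x + 0 * (fun _ _ : R => 0) t x)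
    by (extensionality t; extensionality x; ring).
  exact (C1c_lin F (fun _ _ => 0) c 0 HF C1c_zero).
Qed.

Lemma C1c_mult_periodic (f g : R -> R -> R) :
  C1c f -> C1_in (fun _ => True) g -> periodic_x (fun _ => True) g ->
  C1c (fun t x => f t x * g t x).
Proof.
  intros [[Pf Cf] [M Hf]] Cg Pg. split; [split|].
  - intros t x _. rewrite Pf, Pg; auto.
  - apply C1_in_mult; auto. apply open_true.
  - exists M. intros t x Ht. rewrite Hf by exact Ht. ring.
Qed.

Section LinearFunctional.

Variable X : (R -> R -> R) -> R.
Hypothesis X_linear : linear_on_C1c X.

Lemma linear_on_C1c_zero : X (fun _ _ => 0) = 0.
Proof.
  transitivity (X (fun t x => 0 * (fun _ _ => 0) t x + 0 * (fun _ _ => 0) t x)).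
  - f_equal. extensionality t; extensionality x. ring.
  - rewrite X_linear by apply C1c_zero. ring.
Qed.

Lemma linear_on_C1c_scal (c : R) (F : R -> R -> R) : C1c F ->
  X (fun t x => c * F t x) = c * X F.
Proof.
  intros HF. transitivity (X (fun t x => c * F t x + 0 * (fun _ _ => 0) t x)).
  - f_equal. extensionality t; extensionality x. ring.
  - rewrite X_linear, linear_on_C1c_zero by (exact HF || apply C1c_zero). ring.
Qed.

Lemma linear_on_C1c_sum (P : nat -> R -> R -> R) (m : nat) : (forall k, C1c (P k)) ->
  C1c (fun t x => sum_n_m (fun k => P k t x) 1 m) /\
  X (fun t x => sum_n_m (fun k => P k t x) 1 m) = sum_n_m (fun k => X (P k)) 1 m.
Proof.
  intros HP. induction m as [|m [IHc IHX]].
  - rewrite sum_n_m_zero by lia. change zero with 0.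
    replace (fun t x => sum_n_m (fun k => P k t x) 1 0) with (fun _ _ : R => 0)
      by (extensionality t; extensionality x; rewrite sum_n_m_zero by lia; reflexivity).
    split; [apply C1c_zero|apply linear_on_C1c_zero].
  - replace (fun t x => sum_n_m (fun k => P k t x) 1 (S m))
      with (fun t x => 1 * sum_n_m (fun k => P k t x) 1 m + 1 * P (S m) t x)
      by (extensionality t; extensionality x; rewrite sum_n_Sm by lia;
          change plus with Rplus; ring).
    rewrite sum_n_Sm by lia. change plus with Rplus.
    split; [apply C1c_lin; auto|rewrite X_linear, IHX by auto; ring].
Qed.

End LinearFunctional.

Lemma Holder_norm_bound (alpha : R) (X : (R -> R -> R) -> R) (S T M delta s y : R)
  (g : R -> R -> R) :
  Holder_norm alpha X S T = Finite M -> 0 < delta <= 1 -> S <= s <= T -> -1/2 <= y < 1/2 ->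
  Defs.B1 g -> Rabs (X (Sdz delta s y g)) <= Rpower delta alpha * M.
Proof.
  intros HM Hd Hs Hy Hg.
  assert (Hsup : Rpower delta (- alpha) * Rabs (X (Sdz delta s y g)) <= M).
  { unfold Holder_norm in HM.
    match type of HM with Lub_Rbar ?E = _ => destruct (Lub_Rbar_correct E) as [Hub _] end.
    rewrite HM in Hub. apply Hub. exists delta, s, y, g. tauto. }
  assert (Hinv : Rpower delta alpha * Rpower delta (- alpha) = 1)
    by (rewrite <- Rpower_plus, Rplus_opp_r; apply Rpower_O; lra).
  assert (Hpos : 0 < Rpower delta alpha) by apply exp_pos.
  rewrite <- (Rmult_1_l (Rabs _)), <- Hinv, Rmult_assoc.
  apply Rmult_le_compat_l; lra.
Qed.

Lemma Rabs_sum_n_m_le (a : nat -> R) (B : R) (m : nat) :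
  (forall k, (1 <= k <= m)%nat -> Rabs (a k) <= B) -> Rabs (sum_n_m a 1 m) <= INR m * B.
Proof.
  induction m as [|m IHm]; intros Ha.
  - rewrite sum_n_m_zero by lia. change zero with 0. rewrite Rabs_R0. simpl. lra.
  - rewrite sum_n_Sm, S_INR by lia. change plus with Rplus.
    eapply Rle_trans; [apply Rabs_triang|]. rewrite Rmult_plus_distr_r, Rmult_1_l.
    apply Rplus_le_compat; [apply IHm|apply Ha]; intros; try apply Ha; lia.
Qed.

(** * The dyadic pieces f_n *)

Lemma periodic_int (h : R -> R) : (forall x, h (x + 1) = h x) ->
  forall k x, h (x + IZR k) = h x.
Proof.
  intros H.
  assert (Hnat : forall m x, h (x + INR m) = h x).
  { induction m as [|m IHm]; intros x.
    - rewrite Rplus_0_r. reflexivity.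
    - rewrite S_INR, <- Rplus_assoc, H. apply IHm. }
  intros [|p|p] x.
  - rewrite Rplus_0_r. reflexivity.
  - rewrite <- positive_nat_Z, <- INR_IZR_INZ. apply Hnat.
  - rewrite <- Pos2Z.opp_pos, opp_IZR, <- positive_nat_Z, <- INR_IZR_INZ.
    rewrite <- (Hnat (Pos.to_nat p)). f_equal. ring.
Qed.

Lemma two_pow_pos (n : nat) : 0 < 2 ^ n.
Proof. apply pow_lt. lra. Qed.

Lemma inv_two_pow_le_1 (n : nat) : / 2 ^ n <= 1.
Proof. rewrite <- Rinv_1. apply Rinv_le_contravar; [lra|apply pow_R1_Rle; lra]. Qed.

Section DyadicPiece.

Variable phi : R -> R.
Hypothesis Hphi : dyadic_partition phi.

Lemma phi_ex_derive (r : R) : ex_derive phi r.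
Proof. exact (proj1 Hphi 1%nat r). Qed.

Lemma phi_continuous_Derive (r : R) : continuous (Derive phi) r.
Proof. apply (@ex_derive_continuous R_AbsRing R_NormedModule), (proj1 Hphi 2%nat r). Qed.

Lemma phi_range (r : R) : 0 <= phi r <= 1.
Proof. apply Hphi. Qed.

Lemma phi_out (r : R) : r <= 1/16 \/ 1/4 <= r -> phi r = 0.
Proof. intros Hr. apply Hphi. lra. Qed.

Lemma Derive_phi_out (r : R) : r < 0 \/ 1 < r -> Derive phi r = 0.
Proof.
  intros Hr. rewrite (Derive_ext_loc phi (fun _ => 0)); [apply Derive_const|].
  destruct Hr as [Hr|Hr].
  - apply (locally_abs_lt r (- r)); [lra|]. intros s Hs. apply Rabs_def2 in Hs.
    apply phi_out. lra.
  - apply (locally_abs_lt r (r - 1)); [lra|]. intros s Hs. apply Rabs_def2 in Hs.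
    apply phi_out. lra.
Qed.

Lemma Derive_phi_bounded : exists L, forall r, Rabs (Derive phi r) <= L.
Proof.
  destruct (continuity_ab_maj (fun r => Rabs (Derive phi r)) 0 1) as [M [HM _]]; [lra| |].
  - intros c _. apply continuity_pt_filterlim, (continuous_Rabs_comp (Derive phi)).
    apply phi_continuous_Derive.
  - exists (Rabs (Derive phi M)). intros r.
    destruct (Rlt_or_le r 0); [|destruct (Rlt_or_le 1 r)]; try (apply HM; lra);
      rewrite Derive_phi_out, Rabs_R0 by lra; apply Rabs_pos.
Qed.

Variable n : nat.

Definition phi_n (t : R) : R := phi (2 ^ n * t).

Lemma phi_n_range (t : R) : 0 <= phi_n t <= 1.
Proof. apply phi_range. Qed.

Lemma is_derive_phi_n (t : R) : is_derive phi_n t (2 ^ n * Derive phi (2 ^ n * t)).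
Proof.
  change (2 ^ n * Derive phi (2 ^ n * t)) with (scal (2 ^ n) (Derive phi (2 ^ n * t))).
  apply (is_derive_comp phi (fun t => 2 ^ n * t)).
  - apply Derive_correct, phi_ex_derive.
  - auto_derive; [exact I|ring].
Qed.

Lemma phi_n_C1 (D : R -> Prop) : C1_in D (fun t _ => phi_n t).
Proof.
  apply C1_in_of_t.
  - intros t. exists (2 ^ n * Derive phi (2 ^ n * t)). apply is_derive_phi_n.
  - intros t. apply (continuous_ext (fun t => 2 ^ n * Derive phi (2 ^ n * t))).
    + intros s. symmetry. apply is_derive_unique, is_derive_phi_n.
    + apply (continuous_mult (fun _ => 2 ^ n)); [apply continuous_const|].
      apply (continuous_comp (fun t => 2 ^ n * t) (Derive phi)).
      * apply (continuous_mult (fun _ => 2 ^ n) (fun t => t));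
          [apply continuous_const|apply continuous_id].
      * apply phi_continuous_Derive.
Qed.

Lemma fn_out (f : R -> R -> R) (t x : R) : t <= / 2 ^ n / 16 \/ / 2 ^ n / 4 <= t ->
  fn phi f n t x = 0.
Proof.
  intros Ht. unfold fn. destruct (Rlt_dec 0 t); [|reflexivity].
  rewrite phi_out; [ring|]. generalize (two_pow_pos n). intros P.
  destruct Ht; [left|right].
  - apply (Rmult_le_reg_l (/ 2 ^ n)); [apply Rinv_0_lt_compat, P|].
    rewrite <- Rmult_assoc, Rinv_l by lra. lra.
  - apply (Rmult_le_reg_l (/ 2 ^ n)); [apply Rinv_0_lt_compat, P|].
    rewrite <- Rmult_assoc, Rinv_l by lra. lra.
Qed.

Variable f : R -> R -> R.
Hypothesis f_C1 : C1_on Omega0 f.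

Lemma fn_eq_loc_pos (t0 : R) : 0 < t0 ->
  forall t x, Rabs (t - t0) < t0 -> fn phi f n t x = f t x * phi_n t.
Proof.
  intros Ht0 t x Ht. apply Rabs_def2 in Ht. unfold fn, phi_n.
  destruct (Rlt_dec 0 t); [reflexivity|lra].
Qed.

Lemma fn_eq_loc_nonpos (t0 : R) : t0 <= 0 ->
  forall t x, Rabs (t - t0) < / 2 ^ n / 16 -> fn phi f n t x = 0.
Proof.
  intros Ht0 t x Ht. apply Rabs_def2 in Ht. apply fn_out. lra.
Qed.

Lemma inv_two_pow_16_pos : 0 < / 2 ^ n / 16.
Proof. generalize (Rinv_0_lt_compat _ (two_pow_pos n)). lra. Qed.

Lemma fn_C1 : C1_in (fun _ => True) (fn phi f n).
Proof.
  intros t0 x0 _. destruct (Rlt_or_le 0 t0) as [Ht0|Ht0].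
  - apply (C1_at_ext_loc _ (fun t x => f t x * phi_n t) t0 x0 t0 Ht0).
    + intros t x Ht _. exact (fn_eq_loc_pos t0 Ht0 t x Ht).
    + apply (C1_in_mult Omega0); [apply open_gt|exact (proj2 f_C1)|apply phi_n_C1|exact Ht0].
  - apply (C1_at_ext_loc _ (fun _ _ => 0) t0 x0 _ inv_two_pow_16_pos).
    + intros t x Ht _. exact (fn_eq_loc_nonpos t0 Ht0 t x Ht).
    + apply (C1_in_const (fun _ => True)). exact I.
Qed.

Lemma fn_periodic (t x : R) (k : Z) : fn phi f n t (x + IZR k) = fn phi f n t x.
Proof.
  unfold fn. destruct (Rlt_dec 0 t) as [Ht|Ht]; [|reflexivity].
  f_equal. apply (periodic_int (fun x => f t x)). intros y. apply (proj1 f_C1), Ht.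
Qed.

Lemma fn_C1c : C1c (fn phi f n).
Proof.
  split; [split|].
  - intros t x _. exact (fn_periodic t x 1).
  - exact fn_C1.
  - exists 1. intros t x Ht. apply fn_out.
    generalize (inv_two_pow_le_1 n) (Rinv_0_lt_compat _ (two_pow_pos n)).
    destruct (Rle_or_lt 0 t); [rewrite Rabs_right in Ht|rewrite Rabs_left in Ht]; lra.
Qed.

Lemma fn_partials_pos (t x : R) : 0 < t ->
  dt (fn phi f n) t x = dt f t x * phi_n t + f t x * (2 ^ n * Derive phi (2 ^ n * t)) /\
  dx (fn phi f n) t x = dx f t x * phi_n t.
Proof.
  intros Ht.
  destruct (partials_ext_loc _ (fun t x => f t x * phi_n t) t x t Ht
              (fun t' x' Ht' _ => fn_eq_loc_pos t Ht t' x' Ht') t x) as [Et Ex];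
    try (rewrite Rminus_diag, Rabs_R0; lra).
  destruct (proj2 f_C1 t x Ht) as [Ft [Fx _]].
  rewrite Et, Ex, dt_mult, dx_mult; [|exact Fx|apply ex_derive_const|exact Ft|].
  - unfold dx at 2. rewrite Derive_const. split; [|ring].
    unfold dt at 2. erewrite is_derive_unique; [reflexivity|apply is_derive_phi_n].
  - exists (2 ^ n * Derive phi (2 ^ n * t)). apply is_derive_phi_n.
Qed.

Lemma fn_partials_nonpos (t x : R) : t <= 0 ->
  dt (fn phi f n) t x = 0 /\ dx (fn phi f n) t x = 0.
Proof.
  intros Ht.
  destruct (partials_ext_loc _ (fun _ _ => 0) t x _ inv_two_pow_16_pos
              (fun t' x' Ht' _ => fn_eq_loc_nonpos t Ht t' x' Ht') t x) as [-> ->];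
    try (rewrite Rminus_diag, Rabs_R0; generalize inv_two_pow_16_pos; lra).
  unfold dt, dx. rewrite !Derive_const. split; reflexivity.
Qed.

Section Bounds.

Variables L Sf St Sx : R.
Hypothesis HL : forall r, Rabs (Derive phi r) <= L.
Hypothesis HSf : forall t x, Omega0 t -> Rabs (f t x) <= Sf.
Hypothesis HSt : forall t x, Omega0 t -> Rabs (dt f t x) <= St.
Hypothesis HSx : forall t x, Omega0 t -> Rabs (dx f t x) <= Sx.

Lemma fn_bound (t x : R) : Rabs (fn phi f n t x) <= Sf.
Proof.
  unfold fn. destruct (Rlt_dec 0 t) as [Ht|Ht].
  - destruct (phi_n_range t). fold (phi_n t).
    rewrite Rabs_mult, (Rabs_pos_eq (phi_n t)) by assumption.
    generalize (HSf t x Ht) (Rabs_pos (f t x)). nra.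
  - rewrite Rabs_R0. exact (Rle_trans _ _ _ (Rabs_pos _) (HSf 1 0 Rlt_0_1)).
Qed.

Lemma dt_fn_bound (t x : R) : Rabs (dt (fn phi f n) t x) <= St + 2 ^ n * L * Sf.
Proof.
  assert (P := two_pow_pos n).
  assert (L0 := Rle_trans _ _ _ (Rabs_pos _) (HL 0)).
  assert (Sf0 := Rle_trans _ _ _ (Rabs_pos _) (HSf 1 0 Rlt_0_1)).
  destruct (Rle_or_lt t 0) as [Ht|Ht].
  - destruct (fn_partials_nonpos t x Ht) as [-> _]. rewrite Rabs_R0.
    generalize (Rle_trans _ _ _ (Rabs_pos _) (HSt 1 0 Rlt_0_1))
      (Rmult_le_pos _ _ (Rmult_le_pos _ _ (Rlt_le _ _ P) L0) Sf0).
    lra.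
  - destruct (fn_partials_pos t x Ht) as [-> _]. destruct (phi_n_range t).
    eapply Rle_trans; [apply Rabs_triang|]. apply Rplus_le_compat.
    + rewrite Rabs_mult, (Rabs_pos_eq (phi_n t)) by assumption.
      generalize (HSt t x Ht) (Rabs_pos (dt f t x)). nra.
    + rewrite (Rmult_comm (f t x)). apply Rabs_mult_le; [|apply HSf, Ht].
      rewrite Rabs_mult, Rabs_pos_eq by lra. apply Rmult_le_compat_l; [lra|apply HL].
Qed.

Lemma dx_fn_bound (t x : R) : Rabs (dx (fn phi f n) t x) <= Sx.
Proof.
  destruct (Rle_or_lt t 0) as [Ht|Ht].
  - destruct (fn_partials_nonpos t x Ht) as [_ ->]. rewrite Rabs_R0.
    exact (Rle_trans _ _ _ (Rabs_pos _) (HSx 1 0 Rlt_0_1)).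
  - destruct (fn_partials_pos t x Ht) as [_ ->]. destruct (phi_n_range t).
    rewrite Rabs_mult, (Rabs_pos_eq (phi_n t)) by assumption.
    generalize (HSx t x Ht) (Rabs_pos (dx f t x)). nra.
Qed.

Lemma fn_C1_bounds : C1_bounds (fn phi f n) Sf (St + 2 ^ n * L * Sf) Sx.
Proof. split; [exact fn_bound|split; [exact dt_fn_bound|exact dx_fn_bound]]. Qed.

End Bounds.

End DyadicPiece.

Lemma Sdz_periodize (H : R -> R -> R) (delta s y t x : R) : 0 < delta ->
  vanishes_off_ball (1/4) H ->
  Sdz delta s y (periodize H) t x = / delta ^ 2 * H ((t - s) / delta) (repT (x - y) / delta).
Proof.
  intros Hd HV. set (r := repT (x - y)).
  assert (Habs : forall a, Rabs (a / delta) = Rabs a / delta)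
    by (intros a; rewrite Rabs_div, (Rabs_pos_eq delta); lra).
  unfold Sdz, lift. fold r.
  destruct (Rlt_dec (dist2 t x s y) delta) as [Hd'|Hd'];
    [destruct (Rlt_dec (Rabs (r / delta)) (1/2)) as [Hb|Hb]|].
  - unfold periodize. rewrite (repT_id (r / delta)); [reflexivity|].
    apply Rabs_def2 in Hb. lra.
  - rewrite HV; [ring|]. generalize (Rabs_pos ((t - s) / delta)). lra.
  - rewrite HV; [ring|]. rewrite !Habs.
    assert (delta <= Rabs (t - s) + Rabs r)
      by (unfold dist2 in Hd'; generalize (dT_le_repT x y); fold r; lra).
    unfold Rdiv. rewrite <- Rmult_plus_distr_r.
    apply (Rmult_le_reg_r delta); [exact Hd|].
    replace ((Rabs (t - s) + Rabs r) * / delta * delta) with (Rabs (t - s) + Rabs r)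
      by (field; lra).
    lra.
Qed.

Lemma bump_scaled_C1 (c : R) : C1_in (fun _ => True) (fun _ u => bump (c * u)).
Proof.
  refine (C1_in_ext _ _ _ _ (C1_in_affine (fun _ w => bump w) 0 1 0 c bump_C1)).
  intros a u. simpl. rewrite Rplus_0_l. reflexivity.
Qed.

Lemma bump_scaled_C1_bounds (c : R) :
  C1_bounds (fun _ u => bump (c * u)) 1 0 (2 * Rabs c).
Proof.
  split; [|split]; intros a u.
  - apply bump_bound.
  - unfold dt. rewrite Derive_const, Rabs_R0. lra.
  - unfold dx. rewrite (Derive_comp bump (fun u => c * u)).
    + rewrite Derive_bump, Rmult_comm, Rabs_mult.
      replace (Derive (fun u => c * u) u) with c.
      * apply Rmult_le_compat_r; [apply Rabs_pos|apply bump'_bound].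
      * symmetry. apply is_derive_unique. auto_derive; [exact I|ring].
    + exists (bump' (c * u)). apply is_derive_bump.
    + exists c. auto_derive; [exact I|ring].
Qed.

Lemma Rpower_inv_two_pow (n : nat) (y : R) : Rpower (/ 2 ^ n) y = Rpower 2 (- INR n * y).
Proof.
  unfold Rpower. f_equal. rewrite ln_Rinv by apply two_pow_pos. rewrite ln_pow by lra. ring.
Qed.

Section Estimate.

Variable phi : R -> R.
Hypothesis Hphi : dyadic_partition phi.
Variable L : R.
Hypothesis HL : forall r, Rabs (Derive phi r) <= L.
Variable f : R -> R -> R.
Hypothesis f_C1 : C1_on Omega0 f.
Variables Sf St Sx : R.
Hypothesis HSf : forall t x, Omega0 t -> Rabs (f t x) <= Sf.
Hypothesis HSt : forall t x, Omega0 t -> Rabs (dt f t x) <= St.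
Hypothesis HSx : forall t x, Omega0 t -> Rabs (dx f t x) <= Sx.
Hypothesis norm_pos : 0 < Sf + St + Sx.
Variable n : nat.

Definition delta : R := / 2 ^ n.
Definition npieces : nat := (8 * 2 ^ n)%nat.
Definition node (k : nat) : R := 1/2 - INR k / INR npieces.
(* the midpoint of the [t]-support [(delta/16, delta/4)] of [fn phi f n] *)
Definition center : R := 5/32 * delta.
Definition c0 : R := / ((17 + L) * (Sf + St + Sx)).

Definition piece (k : nat) (t x : R) : R :=
  fn phi f n t x * bump (INR npieces * repT (x - node k)).

Definition profile (k : nat) (a u : R) : R :=
  c0 * (fn phi f n (center + delta * a) (node k + delta * u) * bump (8 * u)).

Lemma delta_pos : 0 < delta.
Proof. apply Rinv_0_lt_compat, (two_pow_pos n). Qed.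

Lemma delta_le_1 : delta <= 1.
Proof. exact (inv_two_pow_le_1 n). Qed.

Lemma pow2_delta : 2 ^ n * delta = 1.
Proof. apply Rinv_r, pow_nonzero. lra. Qed.

Lemma npieces_delta : INR npieces * delta = 8.
Proof.
  unfold npieces. rewrite mult_INR, pow_INR. simpl INR. rewrite Rmult_assoc.
  replace (1 + 1) with 2 by ring. rewrite pow2_delta. ring.
Qed.

Lemma npieces_ge_8 : 8 <= INR npieces.
Proof.
  rewrite <- npieces_delta. generalize delta_le_1 delta_pos (pos_INR npieces). nra.
Qed.

Lemma L_nonneg : 0 <= L.
Proof. eapply Rle_trans; [apply Rabs_pos|apply (HL 0)]. Qed.

Lemma c0_pos : 0 < c0.
Proof. apply Rinv_0_lt_compat, Rmult_lt_0_compat; [generalize L_nonneg|]; lra. Qed.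

Lemma fn_sum_pieces :
  fn phi f n = fun t x => sum_n_m (fun k => piece k t x) 1 npieces.
Proof.
  extensionality t; extensionality x. unfold piece, node.
  rewrite (sum_n_m_mult_l (K := R_Ring)). change mult with Rmult.
  rewrite bump_partition; [ring|]. unfold npieces.
  generalize (Nat.pow_nonzero 2 n). lia.
Qed.

Lemma piece_C1c (k : nat) : C1c (piece k).
Proof.
  set (K := fun _ u : R => bump (INR npieces * u)).
  assert (K_vanish : forall a u, 1/4 <= Rabs u -> K a u = 0).
  { intros a u Hu. apply bump_out. rewrite Rabs_mult, Rabs_pos_eq by apply pos_INR.
    generalize npieces_ge_8. nra. }
  assert (K_C1 := C1_in_affine (periodize K) 0 1 (- node k) 1
                    (periodize_C1 K K_vanish (bump_scaled_C1 (INR npieces)))).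
  apply C1c_mult_periodic; [apply fn_C1c; assumption| |].
  - refine (C1_in_ext _ _ _ _ K_C1). intros t x. unfold periodize, K.
    do 3 f_equal. ring.
  - intros t x _. replace (x + 1 - node k) with (x - node k + 1) by ring.
    rewrite repT_plus1. reflexivity.
Qed.

Lemma profile_C1 (k : nat) : C1_in (fun _ => True) (profile k).
Proof.
  apply C1_in_scal; [apply open_true|].
  apply C1_in_mult; [apply open_true| |apply bump_scaled_C1].
  exact (C1_in_affine (fn phi f n) center delta (node k) delta (fn_C1 phi Hphi n f f_C1)).
Qed.

Lemma profile_vanishes (k : nat) : vanishes_off_ball (7/32) (profile k).
Proof.
  intros a u Hau. unfold profile.
  destruct (Rlt_or_le (Rabs u) (1/8)) as [Hu|Hu].
  - assert (Ha : 3/32 < Rabs a) by lra.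
    rewrite (fn_out phi Hphi n); [ring|].
    generalize delta_pos. unfold center, delta. intros Hd.
    unfold Rabs in Ha. destruct (Rcase_abs a); [left|right]; nra.
  - rewrite bump_out; [ring|]. rewrite Rabs_mult, Rabs_pos_eq by lra. lra.
Qed.

Lemma sup_bounds_nonneg : 0 <= Sf /\ 0 <= St /\ 0 <= Sx.
Proof.
  assert (H1 : Omega0 1) by (unfold Omega0; lra).
  split; [|split]; eapply Rle_trans; try apply Rabs_pos;
    [apply (HSf 1 0 H1)|apply (HSt 1 0 H1)|apply (HSx 1 0 H1)].
Qed.

Lemma profile_B1 (k : nat) : Defs.B1 (periodize (profile k)).
Proof.
  assert (Hb := C1_bounds_scal c0 _ _ _ _ (Rlt_le _ _ c0_pos)
    (C1_bounds_mult _ _ _ _ _ _ _ _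
       (C1_in_affine (fn phi f n) center delta (node k) delta (fn_C1 phi Hphi n f f_C1))
       (bump_scaled_C1 8)
       (C1_bounds_affine (fn phi f n) center delta (node k) delta _ _ _
          (fn_C1 phi Hphi n f f_C1) (fn_C1_bounds phi Hphi n f f_C1 L Sf St Sx HL HSf HSt HSx))
       (bump_scaled_C1_bounds 8))).
  apply (B1_periodize (profile k) (7/32) (profile_C1 k) (profile_vanishes k) ltac:(lra) _ _ _ Hb).
  rewrite (Rabs_pos_eq delta), (Rabs_pos_eq 8) by (generalize delta_pos; lra).
  assert (Hc0 : c0 * ((17 + L) * (Sf + St + Sx)) = 1)
    by (apply Rinv_l; generalize L_nonneg; nra).
  destruct sup_bounds_nonneg as [Sf0 [St0 Sx0]].
  assert (Hsum : Sf * 1 + (delta * (St + 2 ^ n * L * Sf) * 1 + Sf * 0)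
                 + (delta * Sx * 1 + Sf * (2 * 8)) <= (17 + L) * (Sf + St + Sx)).
  { replace (delta * (St + 2 ^ n * L * Sf)) with (delta * St + (2 ^ n * delta) * L * Sf) by ring.
    rewrite pow2_delta. generalize delta_le_1 L_nonneg. nra. }
  apply (Rle_trans _ (c0 * ((17 + L) * (Sf + St + Sx)))); [|rewrite Hc0; apply Rle_refl].
  rewrite <- !Rmult_plus_distr_l. apply Rmult_le_compat_l; [apply Rlt_le, c0_pos|exact Hsum].
Qed.

Lemma Sdz_profile (k : nat) (t x : R) :
  Sdz delta center (node k) (periodize (profile k)) t x = / delta ^ 2 * (c0 * piece k t x).
Proof.
  assert (Hd := delta_pos).
  rewrite Sdz_periodize; [|exact Hd|intros a u Hau; apply (profile_vanishes k); lra].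
  unfold profile, piece. set (r := repT (x - node k)).
  replace (center + delta * ((t - center) / delta)) with t by (field; lra).
  replace (node k + delta * (r / delta)) with (x + IZR (- Int_part (x - node k + 1/2)))
    by (unfold r, repT; rewrite opp_IZR; field; lra).
  rewrite (fn_periodic phi n f f_C1).
  replace (8 * (r / delta)) with (INR npieces * r) by (rewrite <- npieces_delta; field; lra).
  reflexivity.
Qed.

Lemma X_piece_bound (alpha M : R) (X : (R -> R -> R) -> R) (k : nat) :
  linear_on_C1c X -> Holder_norm alpha X (-1) 2 = Finite M -> (1 <= k <= npieces)%nat ->
  Rabs (X (piece k)) <= delta ^ 2 / c0 * (Rpower delta alpha * M).
Proof.
  intros HX HM Hk. assert (Hd := delta_pos). assert (Hc := c0_pos).
  assert (Epiece : piece k = fun t x =>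
            delta ^ 2 / c0 * Sdz delta center (node k) (periodize (profile k)) t x).
  { extensionality t; extensionality x. rewrite Sdz_profile. field. split; lra. }
  assert (Hnode : -1/2 <= node k < 1/2).
  { unfold node.
    assert (Hk' : 1 <= INR k <= INR npieces) by (split; [apply (le_INR 1)|apply le_INR]; lia).
    generalize npieces_ge_8. intros HN.
    assert (0 < INR k / INR npieces <= 1); [|lra].
    split; [apply Rdiv_lt_0_compat|apply (Rdiv_le_1 (INR k) (INR npieces))]; lra. }
  rewrite Epiece, (linear_on_C1c_scal X HX).
  2:{ replace (Sdz delta center (node k) (periodize (profile k)))
        with (fun t x => / delta ^ 2 * (c0 * piece k t x))
        by (extensionality t; extensionality x; symmetry; apply Sdz_profile).
      apply C1c_scal, C1c_scal, piece_C1c. }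
  rewrite Rabs_mult, (Rabs_pos_eq (delta ^ 2 / c0))
    by (apply Rlt_le, Rdiv_lt_0_compat; [apply pow_lt|]; lra).
  apply Rmult_le_compat_l; [apply Rlt_le, Rdiv_lt_0_compat; [apply pow_lt|]; lra|].
  apply (Holder_norm_bound alpha X (-1) 2); try assumption.
  - generalize delta_le_1. lra.
  - unfold center. generalize delta_le_1. lra.
  - apply profile_B1.
Qed.

Lemma fn_estimate (alpha M : R) (X : (R -> R -> R) -> R) :
  linear_on_C1c X -> Holder_norm alpha X (-1) 2 = Finite M ->
  Rabs (X (fn phi f n)) <= 8 * (17 + L) * Rpower 2 (- INR n * (1 + alpha)) * (Sf + St + Sx) * M.
Proof.
  intros HX HM.
  rewrite fn_sum_pieces. destruct (linear_on_C1c_sum X HX piece npieces piece_C1c) as [_ ->].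
  eapply Rle_trans;
    [apply Rabs_sum_n_m_le; intros k Hk; exact (X_piece_bound alpha M X k HX HM Hk)|].
  rewrite <- Rpower_inv_two_pow, Rpower_plus, Rpower_1 by apply delta_pos. fold delta.
  apply Req_le. assert (Hd := delta_pos). assert (HL0 := L_nonneg).
  replace (INR npieces) with (8 / delta) by (rewrite <- npieces_delta; field; lra).
  unfold c0. field. split; [nra|lra].
Qed.

End Estimate.

Lemma fn_zero (phi : R -> R) (f : R -> R -> R) (n : nat) :
  (forall t x, Omega0 t -> Rabs (f t x) <= 0) -> fn phi f n = fun _ _ => 0.
Proof.
  intros Hf. extensionality t; extensionality x. unfold fn.
  destruct (Rlt_dec 0 t) as [Ht|]; [|reflexivity].
  assert (Hft : Rabs (f t x) = 0) by (apply Rle_antisym; [apply Hf, Ht|apply Rabs_pos]).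
  rewrite (Rabs_eq_0 _ Hft). ring.
Qed.

Theorem lemma4p4 (phi : R -> R) (Hphi : dyadic_partition phi) :
  exists C0 : R,
    forall (alpha : R) (f : R -> R -> R),
      -1 < alpha < 0 ->
      C1_on Omega0 f ->
      (exists T1, forall t x, T1 <= t -> f t x = 0) ->
      is_finite (C1norm_on Omega0 f) ->
      forall (X : (R -> R -> R) -> R) (n : nat),
        in_Calpha alpha X ->
        Rabs (X (fn phi f n)) <=
          C0 * Rpower 2 (- INR n * (1 + alpha))
             * real (C1norm_on Omega0 f) * real (Holder_norm alpha X (-1) 2).
Proof.
  destruct (Derive_phi_bounded phi Hphi) as [L HL].
  exists (8 * (17 + L)).
  intros alpha f _ f_C1 _ f_norm X n [X_linear X_norm].
  assert (HM : Holder_norm alpha X (-1) 2 = Finite (real (Holder_norm alpha X (-1) 2)))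
    by (symmetry; apply X_norm; lra).
  destruct (C1norm_on_finite Omega0 f (ex_intro _ 1 Rlt_0_1) f_norm)
    as (a & b & c & Ea & Eb & Ec & Ha & Hb & Hc & ->).
  destruct (Rlt_or_le 0 (a + b + c)) as [Hpos|Hzero].
  - exact (fn_estimate phi Hphi L HL f f_C1 a b c (supnorm_on_ub _ _ _ Ea)
             (supnorm_on_ub _ _ _ Eb) (supnorm_on_ub _ _ _ Ec) Hpos n alpha _ X X_linear HM).
  - assert (f_zero : forall t x, Omega0 t -> Rabs (f t x) <= 0)
      by (replace 0 with a by lra; exact (supnorm_on_ub _ _ _ Ea)).
    rewrite (fn_zero phi f n f_zero), (linear_on_C1c_zero X X_linear), Rabs_R0.
    replace (a + b + c) with 0 by lra. lra.
Qed.
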